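(* Assume that the pair $(C,A)$ is observable and that $0$ is in the interior of $\mathcal{K}_1$. Let $T>0$. Then there exist $R>0$ with $B(0,R)\subset\mathcal{K}_1$ and $\eta_1>0$ such that the following holds. Let $\delta\in C^\infty(\mathbb{R}^n,\mathbb{R})$ satisfy $\delta(0)=0$ and $\sup_{x\in\mathcal{K}_1}|\delta(x)|<\eta_1$, and let $(\hat x,\varepsilon,\xi,\omega)$ be the solution of $(\mathrm{CS}_\delta)$ with initial condition $(\hat x_0,\varepsilon_0,\xi_0,\omega_0)\in B(0,R)\times\mathbb{R}^n\times\mathcal{S}\times\mathbb{S}^{n-1}$. If $\hat x(t)\in B(0,R)$ for all $t\in[0,T]$, then the input $u:t\mapsto(\lambda+\delta)(\hat x(t))$ makes the system $\dot x=A_{u(t)}x+bu(t)$, $y=Cx$ observable in time $T$.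
   Context: Let $n\ge1$, $A,B\in\mathrm{End}(\mathbb{R}^n)$, $C\in\mathcal{L}(\mathbb{R}^n,\mathbb{R})$, $b\in\mathbb{R}^n$, $A_u=A+uB$. $(C,A)$ is observable if the matrix with rows $C,CA,\dots,CA^{n-1}$ has rank $n$. An input $u$ makes the system $\dot x=A_{u(t)}x+bu(t)$, $y=Cx$ observable in time $T$ if any two solutions with equal outputs on $[0,T]$ coincide on $[0,T]$. Let $\lambda\in C^\infty(\mathbb{R}^n,\mathbb{R})$, $\lambda(0)=0$, be such that $0$ is an asymptotically stable equilibrium of $x\mapsto A_{\lambda(x)}x+b\lambda(x)$ with open domain of attraction $D(\lambda)$. Let $\mathcal{S}$ be a finite-dimensional manifold, $L:\mathcal{S}\to\mathcal{L}(\mathbb{R},\mathbb{R}^n)$, $f(\cdot,u)$ a vector field on $\mathcal{S}$ for each $u\in\mathbb{R}$. For $\delta\in C^\infty(\mathbb{R}^n,\mathbb{R})$, $(\mathrm{CS}_\delta)$ is: $\dot{\hat x}=A_{(\lambda+\delta)(\hat x)}\hat x+b(\lambda+\delta)(\hat x)-L(\xi)C\varepsilon$, $\dot\varepsilon=(A_{(\lambda+\delta)(\hat x)}-L(\xi)C)\varepsilon$, $\dot\xi=f(\xi,(\lambda+\delta)(\hat x))$, $\dot\omega=A_{(\lambda+\delta)(\hat x)}\omega$. $\mathcal{K}=\mathcal{K}_1\times\mathcal{K}_2\times\mathcal{K}_3$ is a semi-algebraic compact subset of $D(\lambda)\times\mathbb{R}^n\times\mathcal{S}$. *)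

From HB Require Import structures.
From mathcomp Require Import all_boot all_order all_algebra.
From mathcomp Require Import all_classical all_reals all_analysis.
Set Implicit Arguments. Unset Strict Implicit. Unset Printing Implicit Defensive.
Import Order.TTheory GRing.Theory Num.Theory.
Import numFieldNormedType.Exports.
Local Open Scope classical_set_scope.
Local Open Scope ring_scope.

Section Defs.
Variable R : realType.

Definition enorm n (x : 'cV[R]_n) : R := Num.sqrt (\sum_(i < n) (x i 0) ^+ 2).
Definition eball n (r : R) : set 'cV[R]_n := [set x | enorm x < r].
Definition sphere n : set 'cV[R]_n := [set x | enorm x = 1].

Fixpoint iterD n (vs : seq 'cV[R]_n) (g : 'cV[R]_n -> R) : 'cV[R]_n -> R :=
  match vs with
  | [::] => g
  | v :: vs' => fun x => derive (iterD vs' g) x v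
  end.
Definition smooth n (g : 'cV[R]_n -> R) : Prop :=
  forall vs : seq 'cV[R]_n,
    continuous (iterD vs g) /\ forall v x, derivable (iterD vs g) x v.

Definition Au n (A B : 'M[R]_n) (u : R) : 'M[R]_n := A + u *: B.

Definition observable_pair n (C : 'rV[R]_n) (A : 'M[R]_n) : Prop :=
  \rank (\matrix_(i < n, j < n) (C *m A ^+ i) 0 j) = n.

Definition closed_loop n (A B : 'M[R]_n) (b : 'cV[R]_n) (lam : 'cV[R]_n -> R)
  (x : 'cV[R]_n) : 'cV[R]_n := Au A B (lam x) *m x + lam x *: b.

Definition fwd_sol n (F : 'cV[R]_n -> 'cV[R]_n) (x : R -> 'cV[R]_n) : Prop :=
  {within [set t | 0 <= t], continuous x} /\
  forall t, 0 < t -> derivable x t 1 /\ derive x t 1 = F (x t).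

Definition asymp_stable n (F : 'cV[R]_n -> 'cV[R]_n) : Prop :=
  F 0 = 0 /\
  (forall eps, 0 < eps -> exists2 d, 0 < d &
     forall x0, enorm x0 < d ->
       (exists x, fwd_sol F x /\ x 0 = x0) /\
       forall x, fwd_sol F x -> x 0 = x0 -> forall t, 0 <= t -> enorm (x t) < eps) /\
  (exists2 r, 0 < r &
     forall x, fwd_sol F x -> enorm (x 0) < r -> x t @[t --> +oo] --> (0 : 'cV[R]_n)).

Definition dom_attraction n (F : 'cV[R]_n -> 'cV[R]_n) : set 'cV[R]_n :=
  [set x0 | exists x, [/\ fwd_sol F x, x 0 = x0 & x t @[t --> +oo] --> (0 : 'cV[R]_n)]].

Inductive polyfun n : ('cV[R]_n -> R) -> Prop :=
  | pf_const (c : R) : polyfun (fun _ => c)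
  | pf_coord (i : 'I_n) : polyfun (fun x => x i 0)
  | pf_add p q : polyfun p -> polyfun q -> polyfun (fun x => p x + q x)
  | pf_mul p q : polyfun p -> polyfun q -> polyfun (fun x => p x * q x).

Definition semialgebraic n (K : set 'cV[R]_n) : Prop :=
  exists (N : nat) (p : nat -> 'cV[R]_n -> R) (M : nat -> nat)
         (q : nat -> nat -> 'cV[R]_n -> R),
    (forall i, polyfun (p i)) /\ (forall i j, polyfun (q i j)) /\
    K = [set x | exists i, [/\ (i < N)%N, p i x = 0 &
                           forall j, (j < M i)%N -> 0 < q i j x]].

Definition sys_sol n (A B : 'M[R]_n) (b : 'cV[R]_n) (u : R -> R) (T : R)
  (x : R -> 'cV[R]_n) : Prop :=
  {within `[0, T], continuous x} /\
  forall t, 0 < t < T ->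
    derivable x t 1 /\ derive x t 1 = Au A B (u t) *m x t + u t *: b.

Definition observable_in_time n (A B : 'M[R]_n) (b : 'cV[R]_n) (C : 'rV[R]_n)
  (u : R -> R) (T : R) : Prop :=
  forall x1 x2, sys_sol A B b u T x1 -> sys_sol A B b u T x2 ->
    (forall t, 0 <= t <= T -> C *m x1 t = C *m x2 t) ->
    forall t, 0 <= t <= T -> x1 t = x2 t.

(* solution on [0,T] of (CS_delta); S is a subset of R^m (the manifold,
   embedded), L : S -> L(R,R^n) ~ R^n, f : S x R -> R^m *)
Definition CS_sol n m (A B : 'M[R]_n) (b : 'cV[R]_n) (C : 'rV[R]_n)
  (lam delta : 'cV[R]_n -> R) (S : set 'cV[R]_m)
  (L : 'cV[R]_m -> 'cV[R]_n) (f : 'cV[R]_m -> R -> 'cV[R]_m) (T : R)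
  (xh eps : R -> 'cV[R]_n) (xi : R -> 'cV[R]_m) (om : R -> 'cV[R]_n) : Prop :=
  let u t := lam (xh t) + delta (xh t) in
  [/\ {within `[0, T], continuous xh} /\ {within `[0, T], continuous eps},
      {within `[0, T], continuous xi} /\ {within `[0, T], continuous om},
      (forall t, 0 <= t <= T -> S (xi t)) &
      forall t, 0 < t < T ->
       [/\ derivable xh t 1 /\
             derive xh t 1 = Au A B (u t) *m xh t + u t *: b - L (xi t) *m (C *m eps t),
           derivable eps t 1 /\
             derive eps t 1 = (Au A B (u t) - L (xi t) *m C) *m eps t,
           derivable xi t 1 /\ derive xi t 1 = f (xi t) (u t) &
           derivable om t 1 /\ derive om t 1 = Au A B (u t) *m om t]].

End Defs.

From HB Require Import structures.
From mathcomp Require Import all_boot all_order all_algebra.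
From mathcomp Require Import all_classical all_reals all_analysis.
From mathcomp Require Import zify ring lra.
Import Order.TTheory GRing.Theory Num.Theory.
Import numFieldNormedType.Exports.
Local Open Scope classical_set_scope.
Local Open Scope ring_scope.
Set Implicit Arguments. Unset Strict Implicit. Unset Printing Implicit Defensive.

(* If the input stays uniformly small on [0, T], the difference e of two
   solutions with the same output solves e' = (A + u B) e with C e = 0.  The
   coordinates y_k = C A^k e satisfy y_k' = y_(k+1) + u C A^k B e, so the
   mean value theorem on short windows turns a small bound on y_k into a
   small bound on y_(k+1); starting from y_0 = 0 this makes y_0, ..., y_(n-1)
   small multiples of M = max |e|, and inverting the observability matrix
   gives max |e| <= M / 2, hence e = 0.  The input (lam + delta)(xh) is small
   because lam is continuous with lam 0 = 0, xh stays in a small ball, and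
   delta is uniformly small on K1. *)

Section RowFunctionals.
Variable R : realType.

Lemma mx_norm_entry m n (v : 'M[R]_(m, n)) i j : `|v i j| <= `|v|.
Proof.
rewrite [leRHS]/Num.Def.normr /= mx_normrE.
by apply: le_trans; last exact: (le_bigmax _ _ (i, j)).
Qed.

Lemma mx_norm_le_entries m n (v : 'M[R]_(m, n)) a :
  0 <= a -> (forall i j, `|v i j| <= a) -> `|v| <= a.
Proof.
move=> a0 va; rewrite /Num.Def.normr /= mx_normrE.
by rewrite (bigmax_le _ a0) //= => -[i j] _.
Qed.

Lemma mx_norm_le_enorm n (x : 'cV[R]_n) : `|x| <= enorm x.
Proof.
apply: mx_norm_le_entries => [|i j]; first exact: sqrtr_ge0.
rewrite (ord1 j) -sqrtr_sqr /enorm; apply: ler_wsqrtr.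
by rewrite (bigD1 i) //= lerDl; apply: sumr_ge0 => l _; exact: sqr_ge0.
Qed.

Definition row_l1 n (X : 'rV[R]_n) : R := \sum_j `|X 0 j|.

Lemma row_l1_ge0 n (X : 'rV[R]_n) : 0 <= row_l1 X.
Proof. exact: sumr_ge0. Qed.

Lemma row_mul_bound n (X : 'rV[R]_n) (v : 'cV[R]_n) :
  `|(X *m v) 0 0| <= row_l1 X * `|v|.
Proof.
rewrite mxE /row_l1 mulr_suml; apply: le_trans (ler_norm_sum _ _ _) _.
by apply: ler_sum => j _; rewrite normrM ler_wpM2l // mx_norm_entry.
Qed.

Lemma row_mul_continuous n (X : 'rV[R]_n) :
  continuous (fun v : 'cV[R]_n => (X *m v) 0 0).
Proof.
have -> : (fun v : 'cV[R]_n => (X *m v) 0 0) = \sum_j (fun v => X 0 j * v j 0).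
  by apply/funext => v; rewrite fct_sumE mxE.
elim/big_ind: _ => [x|f g cf cg x|j _ x].
- exact: cst_continuous.
- exact: continuousD (cf x) (cg x).
- by apply: continuousM; [exact: cst_continuous | exact: coord_continuous].
Qed.

Lemma is_derive_row_mul n (X : 'rV[R]_n) (e : R -> 'cV[R]_n) t :
  derivable e t 1 ->
  is_derive t 1 (fun s => (X *m e s) 0 0) ((X *m 'D_1 e t) 0 0).
Proof.
move=> de; rewrite (derive_mx de) mxE; under eq_bigr do rewrite mxE.
have -> : (fun s => (X *m e s) 0 0) = \sum_j (fun s => X 0 j *: e s j 0).
  by apply/funext => s; rewrite fct_sumE mxE.
apply: is_derive_sum => j; apply: is_deriveZ.
exact/derivableP/((derivable_mxP _ _ _).1 de j 0).
Qed.

End RowFunctionals.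

Section RealFunctions.
Variable R : realType.

Lemma lipschitz_of_derive_bound (f df : R -> R) (a b L : R) :
  (forall x, x \in `]a, b[ -> is_derive x 1 f (df x)) ->
  {within `[a, b], continuous f} ->
  (forall x, x \in `]a, b[ -> `|df x| <= L) ->
  {in `[a, b] &, forall p q, `|f p - f q| <= L * `|p - q|}.
Proof.
move=> fd fc dfL.
suff le_pq p q : p \in `[a, b] -> q \in `[a, b] -> p < q ->
    `|f p - f q| <= L * `|p - q|.
  move=> p q ap aq; case: (ltgtP p q) => [pq|qp|->]; first exact: le_pq.
    by rewrite distrC (distrC p); exact: le_pq.
  by rewrite !subrr normr0 mulr0.
rewrite !in_itv /= => /andP[ap _] /andP[_ qb] pq.
have sub_oo : `]p, q[ `<=` `]a, b[ by apply: subset_itv; rewrite bnd_simp.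
have sub_cc : `[p, q] `<=` `[a, b] by apply: subset_itv; rewrite bnd_simp.
rewrite distrC (distrC p).
have [x /sub_oo xab ->] := MVT pq (fun x px => fd x (sub_oo x px))
  (continuous_subspaceW sub_cc fc).
by rewrite normrM ler_wpM2r // dfL.
Qed.

Lemma derive_interpolation (g p q : R -> R) (T h d eta L : R) :
  0 < h <= T -> 0 <= L ->
  {within `[0, T], continuous g} ->
  (forall s, 0 < s < T -> is_derive s 1 g (p s + q s)) ->
  (forall s, 0 <= s <= T -> `|g s| <= d) ->
  (forall s, 0 <= s <= T -> `|q s| <= eta) ->
  {in `[0, T] &, forall s t, `|p s - p t| <= L * `|s - t|} ->
  forall t, 0 <= t <= T -> `|p t| <= 2 * d / h + eta + L * h.
Proof.
move=> /andP[h0 hT] L0 gc gd gB qB pL t /andP[t0 tT].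
have [a [a0 ahT le_at le_ta]] :
    exists a, [/\ 0 <= a, a + h <= T, a <= t & t <= a + h].
  by case: (leP t (T - h)) => tTh; [exists t | exists (T - h)]; split; lra.
have aah : a < a + h by lra.
have sub_oo : `]a, a + h[ `<=` `]0, T[.
  by apply: subset_itv; rewrite bnd_simp.
have sub_cc : `[a, a + h] `<=` `[0, T].
  by apply: subset_itv; rewrite bnd_simp.
have gd' x : x \in `]a, a + h[ -> is_derive x 1 g (p x + q x).
  by move=> /sub_oo /=; rewrite in_itv /= => /gd.
have [x xa g_inc] := MVT aah gd' (continuous_subspaceW sub_cc gc).
have /andP[ax xah] : a < x < a + h by move: xa; rewrite in_itv.
have [x0 xT] : 0 <= x /\ x <= T by split; lra.
have px : `|p x| <= 2 * d / h + eta.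
  have -> : p x = (g (a + h) - g a) / h - q x.
    by rewrite g_inc (addrC a h) addrK mulfK ?gt_eqF // addrK.
  apply: le_trans (ler_normB _ _) _; apply: lerD; last by rewrite qB // x0 xT.
  rewrite normrM (@gtr0_norm _ h^-1) ?invr_gt0 // ler_pM2r ?invr_gt0 //.
  apply: le_trans (ler_normB _ _) _.
  have := gB a; have := gB (a + h); rewrite a0 ahT; lra.
have ptx : `|p t - p x| <= L * h.
  have tin : t \in `[0, T] by rewrite in_itv /= t0 tT.
  have xin : x \in `[0, T] by rewrite in_itv /= x0 xT.
  apply: le_trans (pL _ _ tin xin) _.
  by rewrite ler_wpM2l // ler_norml; apply/andP; split; lra.
have := ler_normD (p t - p x) (p x); rewrite subrK; lra.
Qed.

End RealFunctions.

Section ObservabilityInequality.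
Variables (R : realType) (n : nat) (C : 'rV[R]_n) (A : 'M[R]_n).

Definition obs_mx : 'M[R]_n := \matrix_(i < n, j < n) (C *m A ^+ i) 0 j.

Definition obs_gain : R := 1 + \sum_i \sum_k `|invmx obs_mx i k|.

Lemma obs_gain_ge1 : 1 <= obs_gain.
Proof. by rewrite lerDl; apply: sumr_ge0 => i _; exact: sumr_ge0. Qed.

Lemma obs_mx_mul (v : 'cV[R]_n) k : (obs_mx *m v) k 0 = (C *m A ^+ k *m v) 0 0.
Proof. by rewrite !mxE; apply: eq_bigr => j _; rewrite mxE. Qed.

Lemma norm_le_obs_gain (v : 'cV[R]_n) d :
  observable_pair C A -> 0 <= d ->
  (forall k : 'I_n, `|(C *m A ^+ k *m v) 0 0| <= d) -> `|v| <= obs_gain * d.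
Proof.
move=> obs d0 vd.
have obs_unit : obs_mx \in unitmx by rewrite -row_free_unit; apply/eqP.
apply: mx_norm_le_entries => [|i j].
  by rewrite mulr_ge0 // (le_trans ler01 obs_gain_ge1).
rewrite (ord1 j) -(mulKmx obs_unit v) mxE.
apply: le_trans (ler_norm_sum _ _ _) _.
apply: (@le_trans _ _ (\sum_k `|invmx obs_mx i k| * d)).
  by apply: ler_sum => k _; rewrite normrM obs_mx_mul ler_wpM2l.
rewrite -mulr_suml ler_wpM2r // /obs_gain.
apply: (@le_trans _ _ (\sum_i \sum_k `|invmx obs_mx i k|)).
  2: by rewrite lerDr.
rewrite [leRHS](bigD1 i) //= lerDl.
by apply: sumr_ge0 => l _; exact: sumr_ge0.
Qed.

End ObservabilityInequality.

Lemma sys_sol_sub (R : realType) n (A B : 'M[R]_n) (b : 'cV[R]_n) (u : R -> R)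
    (T : R) (x1 x2 : R -> 'cV[R]_n) :
  sys_sol A B b u T x1 -> sys_sol A B b u T x2 ->
  {within `[0, T], continuous (fun t => x1 t - x2 t)} /\
  forall t, 0 < t < T -> derivable (fun t => x1 t - x2 t) t 1 /\
    'D_1 (fun t => x1 t - x2 t) t = Au A B (u t) *m (x1 t - x2 t).
Proof.
move=> [c1 d1] [c2 d2]; split => [s | s sT].
  exact: continuousB (c1 s) (c2 s).
have [dx1 D1] := d1 s sT; have [dx2 D2] := d2 s sT.
split; first exact: derivableB.
by rewrite (deriveB dx1 dx2) D1 D2 mulmxBr opprD addrACA subrr addr0.
Qed.

Section SmallInput.
Variables (R : realType) (n : nat) (A B : 'M[R]_n) (C : 'rV[R]_n) (T : R).
Hypothesis T_gt0 : 0 < T.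

Definition coord_growth : R :=
  1 + \sum_(k < n.+1) (row_l1 (C *m A ^+ k) + row_l1 (C *m A ^+ k *m B)).

Lemma coord_growth_gt0 : 0 < coord_growth.
Proof.
rewrite ltr_pwDl //; apply: sumr_ge0 => k _.
by rewrite addr_ge0 // row_l1_ge0.
Qed.

Lemma row_l1_le_coord_growth k : (k <= n)%N ->
  row_l1 (C *m A ^+ k) <= coord_growth /\
  row_l1 (C *m A ^+ k *m B) <= coord_growth.
Proof.
rewrite -ltnS => kn.
pose F (i : 'I_n.+1) := row_l1 (C *m A ^+ i) + row_l1 (C *m A ^+ i *m B).
have F_ge0 i : 0 <= F i by rewrite addr_ge0 // row_l1_ge0.
have Fk : F (Ordinal kn) <= \sum_i F i.
  by rewrite (bigD1 (Ordinal kn)) //= lerDl; exact: sumr_ge0.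
have sumF : \sum_i F i <= coord_growth := ler_wpDl ler01 (lexx _).
move: Fk sumF; rewrite /F /=.
have := row_l1_ge0 (C *m A ^+ k); have := row_l1_ge0 (C *m A ^+ k *m B).
by split; lra.
Qed.

Definition window (t : R) : R := Num.min (Num.min 1 T) (t / (6 * coord_growth)).

(* [tol (n.-1 - k) * M] bounds [C A^k e] when [M] bounds [e]: [tol 0] is
   chosen so that the observability inequality returns [M / 2], and each
   step shrinks by the factor [window / 6] demanded by [tol_window_budget]. *)
Fixpoint tol (j : nat) : R :=
  if j is j'.+1 then tol j' * window (tol j') / 6 else (2 * obs_gain C A)^-1.

Definition small_input_bound : R := Num.min 1 (tol n / (3 * coord_growth)).

Lemma window_gt0 t : 0 < t -> 0 < window t.
Proof.
move=> t0; rewrite !lt_min ltr01 T_gt0 divr_gt0 //.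
by rewrite mulr_gt0 // coord_growth_gt0.
Qed.

Lemma window_le1 t : window t <= 1.
Proof. by rewrite !ge_min lexx. Qed.

Lemma window_le_T t : window t <= T.
Proof. by rewrite !ge_min lexx orbT. Qed.

Lemma window_mul_coord_growth t : window t * (6 * coord_growth) <= t.
Proof.
have : window t <= t / (6 * coord_growth) by rewrite ge_min lexx orbT.
by rewrite ler_pdivlMr // mulr_gt0 // coord_growth_gt0.
Qed.

Lemma tol_gt0 j : 0 < tol j.
Proof.
elim: j => [|j IH] /=.
  by rewrite invr_gt0 mulr_gt0 // (lt_le_trans ltr01 (obs_gain_ge1 _ _)).
by rewrite divr_gt0 // mulr_gt0 // window_gt0.
Qed.

Lemma tol_nonincreasing i j : (i <= j)%N -> tol j <= tol i.
Proof.
elim: j => [|j IH]; first by rewrite leqn0 => /eqP ->.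
rewrite leq_eqVlt ltnS => /predU1P[-> // | /IH]; apply: le_trans => /=.
have := tol_gt0 j; have := window_le1 (tol j); have := window_gt0 (tol_gt0 j).
by move=> *; nra.
Qed.

Lemma small_input_bound_gt0 : 0 < small_input_bound.
Proof.
by rewrite lt_min ltr01 divr_gt0 // ?tol_gt0 // mulr_gt0 // coord_growth_gt0.
Qed.

Lemma small_input_bound_le1 : small_input_bound <= 1.
Proof. by rewrite ge_min lexx. Qed.

Lemma tol_window_budget j : (j <= n)%N ->
  2 * tol j.+1 / window (tol j) + small_input_bound * coord_growth
    + 2 * coord_growth * window (tol j) <= tol j.
Proof.
move=> jn; have h0 := window_gt0 (tol_gt0 j).
have tol_term : 2 * tol j.+1 / window (tol j) = tol j / 3.
  by rewrite /=; field; rewrite gt_eqF.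
have input_term : small_input_bound * (3 * coord_growth) <= tol j.
  apply: le_trans (tol_nonincreasing jn).
  have : small_input_bound <= tol n / (3 * coord_growth).
    by rewrite ge_min lexx orbT.
  by rewrite ler_pdivlMr // mulr_gt0 // coord_growth_gt0.
have window_term := window_mul_coord_growth (tol j).
rewrite tol_term; lra.
Qed.

Section Estimates.
Variables (u : R -> R) (e : R -> 'cV[R]_n) (M : R).
Hypothesis u_small : forall t, 0 <= t <= T -> `|u t| <= small_input_bound.
Hypothesis e_cont : {within `[0, T], continuous e}.
Hypothesis e_ode : forall t, 0 < t < T ->
  derivable e t 1 /\ 'D_1 e t = Au A B (u t) *m e t.
Hypothesis e_le : forall t, 0 <= t <= T -> `|e t| <= M.
Hypothesis e_unobserved : forall t, 0 <= t <= T -> C *m e t = 0.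

Let y k t := (C *m A ^+ k *m e t) 0 0.
Let w k t := (C *m A ^+ k *m B *m e t) 0 0.

Lemma norm_bound_ge0 : 0 <= M.
Proof. by apply: le_trans (normr_ge0 (e 0)) (e_le _); rewrite lexx ltW. Qed.

Lemma obs_coord_le k t :
  (k <= n)%N -> 0 <= t <= T -> `|y k t| <= coord_growth * M.
Proof.
move=> kn tT; apply: le_trans (row_mul_bound _ _) _.
have [yk _] := row_l1_le_coord_growth kn.
exact: ler_pM (row_l1_ge0 _) (normr_ge0 _) yk (e_le tT).
Qed.

Lemma obs_coord_input_le k t :
  (k <= n)%N -> 0 <= t <= T -> `|w k t| <= coord_growth * M.
Proof.
move=> kn tT; apply: le_trans (row_mul_bound _ _) _.
have [_ wk] := row_l1_le_coord_growth kn.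
exact: ler_pM (row_l1_ge0 _) (normr_ge0 _) wk (e_le tT).
Qed.

Lemma obs_coord_continuous k : {within `[0, T], continuous (y k)}.
Proof.
move=> x.
exact: continuous_comp (@e_cont x) (@row_mul_continuous _ _ (C *m A ^+ k) _).
Qed.

Lemma is_derive_obs_coord k t :
  0 < t < T -> is_derive t 1 (y k) (y k.+1 t + u t * w k t).
Proof.
move=> tT; have [de De] := e_ode tT.
have := is_derive_row_mul (C *m A ^+ k) de; rewrite De.
have -> : C *m A ^+ k *m (Au A B (u t) *m e t) =
    C *m A ^+ k.+1 *m e t + u t *: (C *m A ^+ k *m B *m e t).
  rewrite /Au mulmxA mulmxDr mulmxDl -scalemxAr -scalemxAl.
  by rewrite exprSr -mulmxE mulmxA.
by rewrite mxE [X in _ + X]mxE.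
Qed.

Lemma obs_coord_lipschitz k : (k < n)%N ->
  {in `[0, T] &,
    forall s t, `|y k s - y k t| <= 2 * coord_growth * M * `|s - t|}.
Proof.
move=> kn.
apply: (@lipschitz_of_derive_bound R (y k) (fun s => y k.+1 s + u s * w k s)).
- by move=> x; rewrite in_itv /= => /is_derive_obs_coord.
- exact: obs_coord_continuous.
move=> x; rewrite in_itv /= => /andP[x0 xT].
have xT' : 0 <= x <= T by rewrite !ltW.
have uw : `|u x| * `|w k x| <= coord_growth * M.
  rewrite -[leRHS]mul1r; apply: ler_pM => //.
    exact: le_trans (u_small xT') small_input_bound_le1.
  exact: obs_coord_input_le (ltnW kn) xT'.
have := obs_coord_le kn xT'; have := ler_normD (y k.+1 x) (u x * w k x).
rewrite normrM; lra.
Qed.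

Lemma obs_coord_small k :
  (k < n)%N -> forall t, 0 <= t <= T -> `|y k t| <= tol (n.-1 - k) * M.
Proof.
have M0 := norm_bound_ge0.
elim: k => [|k IH] kn t tT.
  rewrite /y expr0 mulmx1 e_unobserved // mxE normr0.
  by rewrite mulr_ge0 // ltW // tol_gt0.
set j := (n.-1 - k.+1)%N.
have ej : (n.-1 - k)%N = j.+1 by rewrite /j; lia.
have jn : (j <= n)%N by rewrite /j; lia.
have h0 := window_gt0 (tol_gt0 j).
set h := window (tol j) in h0 *.
have le_interp : `|y k.+1 t| <= 2 * (tol j.+1 * M) / h
    + small_input_bound * coord_growth * M + 2 * coord_growth * M * h.
  apply: (@derive_interpolation R (y k) (y k.+1) (fun s => u s * w k s) T h
    _ _ _ _ _ (@obs_coord_continuous k) (fun s => @is_derive_obs_coord k s)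
    _ _ (obs_coord_lipschitz kn) t tT).
  - by rewrite h0 window_le_T.
  - by rewrite !mulr_ge0 // ltW // coord_growth_gt0.
  - by move=> s sT; rewrite -ej; apply: IH => //; exact: ltnW.
  - move=> s sT; rewrite normrM -mulrA.
    apply: ler_pM (normr_ge0 _) (normr_ge0 _) (u_small sT) _.
    exact: obs_coord_input_le (ltnW (ltnW kn)) sT.
apply: le_trans le_interp _.
have -> : 2 * (tol j.+1 * M) / h + small_input_bound * coord_growth * M
    + 2 * coord_growth * M * h
  = (2 * tol j.+1 / h + small_input_bound * coord_growth
      + 2 * coord_growth * h) * M by ring.
by rewrite ler_wpM2r // tol_window_budget.
Qed.

End Estimates.

Lemma unobserved_small_input_eq0 (u : R -> R) (e : R -> 'cV[R]_n) :
  observable_pair C A ->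
  (forall t, 0 <= t <= T -> `|u t| <= small_input_bound) ->
  {within `[0, T], continuous e} ->
  (forall t, 0 < t < T -> derivable e t 1 /\ 'D_1 e t = Au A B (u t) *m e t) ->
  (forall t, 0 <= t <= T -> C *m e t = 0) ->
  forall t, 0 <= t <= T -> e t = 0.
Proof.
move=> obs u_small e_cont e_ode e_unobserved.
have [tm tmT e_max] := EVT_max (ltW T_gt0)
  (fun x => continuous_comp (e_cont x) (@norm_continuous _ _ (e x))).
set M := `|e tm|.
have M_ge0 : 0 <= M := normr_ge0 _.
have e_le t : 0 <= t <= T -> `|e t| <= M.
  by move=> tT; apply: e_max; rewrite in_itv.
have e_le_half t : 0 <= t <= T -> `|e t| <= M / 2.
  move=> tT; have gain_gt0 := lt_le_trans ltr01 (obs_gain_ge1 C A).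
  have -> : M / 2 = obs_gain C A * (tol 0 * M).
    by rewrite /=; field; rewrite gt_eqF.
  apply: norm_le_obs_gain => [//||k].
    by rewrite mulr_ge0 // ltW // tol_gt0.
  have := obs_coord_small u_small e_cont e_ode e_le e_unobserved (ltn_ord k) tT.
  by move/le_trans; apply; rewrite ler_wpM2r // tol_nonincreasing.
have M_le0 : M <= 0.
  have tm_in : 0 <= tm <= T by move: tmT; rewrite in_itv.
  by have := e_le_half _ tm_in; rewrite -/M; lra.
by move=> t tT; apply/eqP; rewrite -normr_le0 (le_trans (e_le _ tT)).
Qed.

Lemma observable_in_time_small_input (b : 'cV[R]_n) (u : R -> R) :
  observable_pair C A ->
  (forall t, 0 <= t <= T -> `|u t| <= small_input_bound) ->
  observable_in_time A B b C u T.
Proof.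
move=> obs u_small x1 x2 x1_sol x2_sol same_output t tT.
have [e_cont e_ode] := sys_sol_sub x1_sol x2_sol.
apply/eqP; rewrite -subr_eq0; apply/eqP.
apply: (unobserved_small_input_eq0 obs u_small e_cont e_ode) => // s sT.
by rewrite mulmxBr same_output // subrr.
Qed.

End SmallInput.

Section Neighbourhoods.
Variable R : realType.

Lemma eball_sub_of_interior n (K : set 'cV[R]_n) :
  (K°) 0 -> exists2 r, 0 < r & eball r `<=` K.
Proof.
rewrite /interior => /nbhs_ballP[r r_gt0 rK]; exists r => // x /= xr.
apply: rK; rewrite -ball_normE /ball_ /= sub0r normrN.
exact: le_lt_trans (mx_norm_le_enorm x) xr.
Qed.

Lemma small_on_eball n (g : 'cV[R]_n -> R) e :
  {for 0, continuous g} -> g 0 = 0 -> 0 < e ->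
  exists2 r, 0 < r & forall x, eball r x -> `|g x| < e.
Proof.
move=> /cvgrPdist_lt g_cont g0 e_gt0.
have /nbhs_ballP[r r_gt0 rg] := g_cont e e_gt0.
exists r => // x xr.
have := rg x; rewrite -ball_normE /ball_ /= sub0r normrN g0 sub0r normrN; apply.
exact: le_lt_trans (mx_norm_le_enorm x) xr.
Qed.

Lemma normr_le_sup_compact (X : topologicalType) (K : set X) (g : X -> R) x :
  compact K -> continuous g -> K x -> `|g x| <= sup [set `|g y| | y in K].
Proof.
move=> K_compact g_cont Kx.
have normg_cont : {within K, continuous (fun y => `|g y|)}.
  apply: continuous_subspaceT => y.
  exact: continuous_comp (g_cont y) (@norm_continuous _ _ (g y)).
have [y0 _ y0_max] := compact_EVT_max (ex_intro _ x Kx) K_compact normg_cont.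
apply: ub_le_sup; last by exists x.
by exists `|g y0| => _ [y Ky <-]; apply: y0_max; rewrite inE.
Qed.

End Neighbourhoods.

Unset Implicit Arguments.

Theorem proposition3 (R : realType) (n m : nat) (A B : 'M[R]_n)
  (C : 'rV[R]_n) (b : 'cV[R]_n) (lam : 'cV[R]_n -> R)
  (S : set 'cV[R]_m) (L : 'cV[R]_m -> 'cV[R]_n) (f : 'cV[R]_m -> R -> 'cV[R]_m)
  (K1 : set 'cV[R]_n) :
  (0 < n)%N ->
  smooth lam -> lam 0 = 0 ->
  asymp_stable (closed_loop A B b lam) ->
  semialgebraic K1 -> compact K1 ->
  K1 `<=` dom_attraction (closed_loop A B b lam) ->
  observable_pair C A ->
  (K1^°) 0 ->
  forall T : R, 0 < T ->
  exists Rr : R, 0 < Rr /\ eball Rr `<=` K1 /\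
  exists eta1 : R, 0 < eta1 /\
  forall delta : 'cV[R]_n -> R,
    smooth delta -> delta 0 = 0 ->
    sup [set `|delta x| | x in K1] < eta1 ->
    forall (xh eps : R -> 'cV[R]_n) (xi : R -> 'cV[R]_m) (om : R -> 'cV[R]_n),
      eball Rr (xh 0) -> S (xi 0) -> sphere (om 0) ->
      CS_sol A B b C lam delta S L f T xh eps xi om ->
      (forall t, 0 <= t <= T -> eball Rr (xh t)) ->
      observable_in_time A B b C (fun t => lam (xh t) + delta (xh t)) T.
Proof.
move=> _ lam_smooth lam0 _ _ K1_compact _ obs K1_int T T_gt0.
have eps_gt0 := small_input_bound_gt0 A B C T_gt0.
set eps := small_input_bound A B C T in eps_gt0 *.
have [r1 r1_gt0 r1_K1] := eball_sub_of_interior K1_int.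
have [r2 r2_gt0 lam_small] :
    exists2 r2, 0 < r2 & forall x, eball r2 x -> `|lam x| < eps / 2.
  apply: small_on_eball => //; last exact: divr_gt0.
  exact: (lam_smooth [::]).1.
exists (Num.min r1 r2); split; first by rewrite lt_min r1_gt0.
split; first by move=> x; rewrite /eball /= lt_min => /andP[/r1_K1].
exists (eps / 2); split; first exact: divr_gt0.
move=> delta delta_smooth _ delta_sup xh _ _ _ _ _ _ _ xh_ball.
apply: observable_in_time_small_input => // t tT.
have := xh_ball t tT; rewrite /eball /= lt_min => /andP[xh_r1 xh_r2].
have delta_le : `|delta (xh t)| <= sup [set `|delta x| | x in K1].
  exact: normr_le_sup_compact K1_compact (delta_smooth [::]).1 (r1_K1 _ xh_r1).
have := lam_small _ xh_r2; have := ler_normD (lam (xh t)) (delta (xh t)).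
rewrite -/eps; lra.
Qed.
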